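(* Let $\mathfrak g$ be a finite-dimensional complex Lie algebra, $a\in\mathfrak g^*$, $U\subset\mathfrak g^*$ open, and $\lambda:U\to\mathbb C$ a (locally analytic) function such that for every $x\in U$, $\lambda(x)$ is an eigenvalue of the pencil $\mathcal A_x+\mu\mathcal A_a$. Then $\lambda$ is not constant on any neighbourhood of any point of $U$.
   Context: For $x\in\mathfrak g^*$, $\mathcal A_x$ is the skew form $(\xi,\eta)\mapsto\langle x,[\xi,\eta]\rangle$ on $\mathfrak g$. A number $\lambda_0\in\mathbb C$ is an eigenvalue (characteristic number) of the pencil $\mathcal A_x+\mu\mathcal A_a$ if $\operatorname{rk}(\mathcal A_x-\lambda_0\mathcal A_a)<\max_{\mu}\operatorname{rk}(\mathcal A_x+\mu\mathcal A_a)$, i.e. it is the eigenvalue of a Jordan block in the Jordan–Kronecker decomposition of the pair $(\mathcal A_x,\mathcal A_a)$. *)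

From HB Require Import structures.
From mathcomp Require Import all_boot all_order all_algebra.
From mathcomp Require Import reals.
From mathcomp.real_closed Require Import complex.
Set Implicit Arguments. Unset Strict Implicit. Unset Printing Implicit Defensive.
Import Order.TTheory GRing.Theory Num.Theory.
Local Open Scope ring_scope.

(* Every n-dimensional Lie algebra over
   K is isomorphic to such a one (choose a basis). *)
Definition is_lie_bracket (K : fieldType) (n : nat)
    (br : 'rV[K]_n -> 'rV[K]_n -> 'rV[K]_n) : Prop :=
  [/\ (forall (c : K) u v w, br (c *: u + v) w = c *: br u w + br v w),
      (forall (c : K) u v w, br w (c *: u + v) = c *: br w u + br w v),
      (forall u, br u u = 0) &
      (forall u v w, br u (br v w) + br v (br w u) + br w (br u v) = 0)].

(* g^* is identified with 'rV[K]_n via the standard pairing <x, xi>. *)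
Definition pairing (K : fieldType) (n : nat) (x xi : 'rV[K]_n) : K :=
  \sum_(k < n) x 0 k * xi 0 k.

(* Gram matrix, in the standard basis e_i of g, of the skew form
   A_x(xi, eta) = <x, [xi, eta]>. Its rank is the rank of the form. *)
Definition formA (K : fieldType) (n : nat)
    (br : 'rV[K]_n -> 'rV[K]_n -> 'rV[K]_n) (x : 'rV[K]_n) : 'M[K]_n :=
  \matrix_(i < n, j < n) pairing x (br (delta_mx 0 i) (delta_mx 0 j)).

(* lambda0 is an eigenvalue of the pencil A_x + mu A_a:
   rk (A_x - lambda0 A_a) < max_mu rk (A_x + mu A_a). *)
Definition pencil_eigenvalue (K : fieldType) (n : nat)
    (br : 'rV[K]_n -> 'rV[K]_n -> 'rV[K]_n) (x a : 'rV[K]_n) (l0 : K) : Prop :=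
  exists mu : K,
    (\rank (formA br x - l0 *: formA br a)%R < \rank (formA br x + mu *: formA br a)%R)%N.

Definition cball (R : realType) (n : nat) (x : 'rV[R[i]]_n) (eps : R)
    (y : 'rV[R[i]]_n) : Prop :=
  forall k : 'I_n, `|y 0 k - x 0 k| < (eps%:C)%C.

Definition copen (R : realType) (n : nat) (U : 'rV[R[i]]_n -> Prop) : Prop :=
  forall x, U x -> exists2 eps : R, 0 < eps & forall y, cball x eps y -> U y.

(* Suppose lam = c near x0.  The eigenvalue condition then makes
   A_x - c A_a = A_(x - c a) of rank strictly below the generic rank
   r = max_z rk A_z for every x near x0.  But on the line from x0 - c a to a
   point z of rank r, an r-minor of A_z followed along the line is a nonzero
   polynomial, so outside its finitely many roots the rank is at least r; such
   points come arbitrarily close to x0 - c a. *)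
From Stdlib Require Import Classical.
From HB Require Import structures.
From mathcomp Require Import all_boot all_order all_algebra.
From mathcomp Require Import reals.
From mathcomp.real_closed Require Import complex.
Set Implicit Arguments.
Unset Strict Implicit.
Unset Printing Implicit Defensive.
Import Order.TTheory GRing.Theory Num.Theory.
Local Open Scope ring_scope.

Lemma formA_is_linear (K : fieldType) n (br : 'rV[K]_n -> 'rV[K]_n -> 'rV[K]_n) :
  linear (formA br).
Proof.
move=> c x y; apply/matrixP => i j; rewrite !mxE /pairing mulr_sumr -big_split.
by apply: eq_bigr => k _; rewrite !mxE mulrDl mulrA.
Qed.

HB.instance Definition _ (K : fieldType) n (br : 'rV[K]_n -> 'rV[K]_n -> 'rV[K]_n) :=
  GRing.isLinear.Build K 'rV[K]_n 'M[K]_n _ (formA br) (formA_is_linear br).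

Lemma unit_mulmx_leq_rank (K : fieldType) m n r
    (X : 'M[K]_(r, m)) (M : 'M[K]_(m, n)) (Y : 'M[K]_(n, r)) :
  X *m M *m Y \in unitmx -> (r <= \rank M)%N.
Proof.
move/mxrank_unit <-; apply: leq_trans (mxrankM_maxl _ _) _.
exact: mxrankM_maxr.
Qed.

Lemma exists_unit_mulmx_rank (K : fieldType) m n (M : 'M[K]_(m, n)) :
  exists (X : 'M[K]_(\rank M, m)) (Y : 'M[K]_(n, \rank M)), X *m M *m Y \in unitmx.
Proof.
set r := \rank M.
exists (pid_mx r *m invmx (col_ebase M)), (invmx (row_ebase M) *m pid_mx r).
rewrite -{2}(mulmx_ebase M) !mulmxA mulmxKV ?col_ebase_unit //.
rewrite -!mulmxA mulKVmx ?row_ebase_unit // !mul_pid_mx.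
by rewrite /r minnn (minn_idPr (rank_leq_col M)) minnn (minn_idPr (rank_leq_row M))
  pid_mx_1 unitmx1.
Qed.

Definition pencil_det (K : fieldType) r (P Q : 'M[K]_r) : {poly K} :=
  \det (map_mx polyC P + 'X *: map_mx polyC Q).

Lemma horner_pencil_det (K : fieldType) r (P Q : 'M[K]_r) t :
  (pencil_det P Q).[t] = \det (P + t *: Q).
Proof.
rewrite -[_.[t]]/(horner_eval t _) -det_map_mx; congr (\det _).
by apply/matrixP => i j; rewrite !mxE /= horner_evalE hornerD hornerM hornerX !hornerC.
Qed.

(* [p] is a nonzero [\rank (P + Q)]-minor of [P + t Q] seen as a polynomial in
   [t]; it does not vanish at [t = 1]. *)
Lemma mxrank_pencil_generic (K : fieldType) m n (P Q : 'M[K]_(m, n)) :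
  exists2 p : {poly K}, p != 0 &
    forall t, ~~ root p t -> (\rank (P + Q)%R <= \rank (P + t *: Q)%R)%N.
Proof.
have [X [Y unitXY]] := exists_unit_mulmx_rank (P + Q).
have pencilE t : X *m (P + t *: Q) *m Y = X *m P *m Y + t *: (X *m Q *m Y).
  by rewrite mulmxDr mulmxDl -scalemxAr -scalemxAl.
exists (pencil_det (X *m P *m Y) (X *m Q *m Y)) => [|t].
  have unit_at1 : X *m P *m Y + 1 *: (X *m Q *m Y) \in unitmx.
    by rewrite -pencilE scale1r.
  apply: contraTneq unit_at1 => p0.
  by rewrite unitmxE -horner_pencil_det p0 horner0 unitr0.
rewrite /root horner_pencil_det -pencilE => detn0.
by apply: (unit_mulmx_leq_rank (X := X) (Y := Y)); rewrite unitmxE unitfE.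
Qed.

Lemma poly_nonroot_near0 (K : numFieldType) (p : {poly K}) (e : K) :
  p != 0 -> 0 < e -> exists2 t, `|t| < e & ~~ root p t.
Proof.
move=> pn0 e_gt0; pose ts := [seq e / j.+2%:R | j <- iota 0 (size p)].
have ts_uniq : uniq ts.
  rewrite map_inj_in_uniq ?iota_uniq // => j k _ _ /(mulfI (lt0r_neq0 e_gt0)).
  by move/invr_inj/eqP; rewrite eqr_nat => /eqP [].
have /allPn [_ /mapP [j _ ->] nroot] : ~~ all (root p) ts.
  apply/negP => /(max_poly_roots pn0)/(_ ts_uniq).
  by rewrite size_map size_iota ltnn.
exists (e / j.+2%:R) => //; rewrite ger0_norm ?divr_ge0 ?ltW //.
by rewrite ltr_pdivrMr // ltr_pMr // ltr1n.
Qed.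

Lemma cball_line (R : realType) n (x d : 'rV[R[i]]_n) (eps : R) :
  0 < eps -> exists2 delta : R[i], 0 < delta &
    forall t, `|t| < delta -> cball x eps (x + t *: d).
Proof.
move=> eps_gt0; pose S := 1 + \sum_k `|d 0 k|.
have rest_ge0 (P : pred 'I_n) : 0 <= \sum_(k | P k) `|d 0 k| by rewrite sumr_ge0.
have S_gt0 : 0 < S by rewrite ltr_pwDl.
have dS k : `|d 0 k| < S by rewrite /S (bigD1 k) //= addrCA ltrDl ltr_pwDl.
exists ((eps%:C)%C / S) => [|t t_lt k]; first by rewrite divr_gt0 ?ltcR.
rewrite !mxE addrAC subrr add0r normrM -[(eps%:C)%C](divfK (lt0r_neq0 S_gt0)).
exact: ltr_pM.
Qed.

Lemma cball_le (R : realType) n (x y : 'rV[R[i]]_n) (e e' : R) :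
  e <= e' -> cball x e y -> cball x e' y.
Proof. by move=> le_ee' xy k; apply: lt_le_trans (xy k) _; rewrite lecR. Qed.

Lemma exists_argmax_bounded (T : Type) (f : T -> nat) (b : nat) (z0 : T) :
  (forall z, (f z <= b)%N) -> exists z, forall z', (f z' <= f z)%N.
Proof.
move=> f_le_b; apply: NNPP => no_max.
have grow z : exists z', (f z < f z')%N.
  have [z' /negP] := not_all_ex_not _ _ (not_ex_all_not _ _ no_max z).
  by rewrite -ltnNge; exists z'.
suff [z] : exists z, (b < f z)%N by rewrite ltnNge f_le_b.
elim: b.+1 => [|k [z le_kz]]; first by exists z0.
by have [z' lt_zz'] := grow z; exists z'; apply: leq_ltn_trans lt_zz'.
Qed.

Theorem lemma2 (R : realType) (n : nat)
    (br : 'rV[R[i]]_n -> 'rV[R[i]]_n -> 'rV[R[i]]_n)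
    (a : 'rV[R[i]]_n) (U : 'rV[R[i]]_n -> Prop)
    (lam : 'rV[R[i]]_n -> R[i]) :
  is_lie_bracket br ->
  copen U ->
  (forall x, U x -> pencil_eigenvalue br x a (lam x)) ->
  forall x0, U x0 -> forall eps : R, 0 < eps ->
    exists y, [/\ U y, cball x0 eps y & lam y != lam x0].
Proof.
move=> _ U_open lam_eig x0 Ux0 eps eps_gt0; apply: NNPP => no_y.
have lam_const y : U y -> cball x0 eps y -> lam y = lam x0.
  by move=> Uy x0y; apply: NNPP => /eqP ne; apply: no_y; exists y.
pose A := formA br; set c := lam x0.
have [z z_max] := exists_argmax_bounded (0 : 'rV_n) (fun z => rank_leq_row (A z)).
set w := x0 - c *: a; set d := z - w.
have [p p_neq0 p_rank] := mxrank_pencil_generic (A w) (A d).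
have [e1 e1_gt0 ball_e1_U] := U_open x0 Ux0.
set e := Order.min eps e1.
have [le_e_eps le_e_e1] : e <= eps /\ e <= e1 by rewrite !ge_min !lexx ?orbT.
have e_gt0 : 0 < e by rewrite lt_min eps_gt0.
have [delta delta_gt0 near_x0] := cball_line x0 d e_gt0.
have [t t_small t_nroot] := poly_nonroot_near0 p_neq0 delta_gt0.
set y := x0 + t *: d; have x0y := near_x0 t t_small.
have Uy : U y by apply/ball_e1_U/(cball_le le_e_e1).
have [mu] := lam_eig y Uy; rewrite (lam_const y Uy (cball_le le_e_eps x0y)) -/c.
have -> : A y - c *: A a = A w + t *: A d by rewrite -!linearZ -linearB -linearD addrAC.
have Az : A z = A w + A d by rewrite -linearD addrC subrK.
have -> : A y + mu *: A a = A (y + mu *: a) by rewrite -linearZ -linearD.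
rewrite ltnNge => /negP; apply.
by apply: leq_trans (z_max _) _; rewrite Az p_rank.
Qed.
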